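(* Fix real numbers $L,\ell_1,\ell_2>0$. The mapping $(\phi_1,\phi_2)\mapsto\phi_1\otimes\phi_2$ induces a continuous bijection \[\bigsqcup_{\substack{\ell'_1>0,\ \ell'_2>0\\ \ell'_1+\ell'_2=L}}\mathcal{G}(\ell'_1,\ell_1)\times\mathcal{G}(\ell'_2,\ell_2)\longrightarrow\mathcal{G}(L,\ell_1+\ell_2)\] which is not a homeomorphism.
   Context: $\mathcal{G}$ is the category whose objects are the real numbers $\ell>0$, with $\mathcal{G}(\ell_1,\ell_2)$ the set of nondecreasing homeomorphisms $[0,\ell_1]\to[0,\ell_2]$ (necessarily sending $0\mapsto0$, $\ell_1\mapsto\ell_2$), equipped with the compact-open topology, and composition given by composition of maps. For $\phi_i:[0,\ell_i]\to[0,\ell'_i]$ ($i=1,2$), $\phi_1\otimes\phi_2:[0,\ell_1+\ell_2]\to[0,\ell'_1+\ell'_2]$ is defined by $(\phi_1\otimes\phi_2)(t)=\phi_1(t)$ for $0\le t\le\ell_1$ and $\phi_2(t-\ell_1)+\ell'_1$ for $\ell_1\le t\le\ell_1+\ell_2$; on objects $\ell\otimes\ell'=\ell+\ell'$. The disjoint union on the left carries the disjoint union topology over the index set (indexed by the pairs $(\ell'_1,\ell'_2)$). *)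

From HB Require Import structures.
From mathcomp Require Import all_boot all_order all_algebra.
From mathcomp Require Import all_classical all_reals all_analysis.
Unset Printing Implicit Defensive.
Import Order.TTheory GRing.Theory Num.Theory.
Local Open Scope classical_set_scope.
Local Open Scope ring_scope.

(* The interval [0, l] as a topological space (subspace topology of R,
   realised as the sigma type with the initial topology of the inclusion). *)
Definition Icc0 (R : realType) (l : R) : Type := set_type `[0, l].

Definition is_nd_homeo (R : realType) (l1 l2 : R) (f : Icc0 R l1 -> Icc0 R l2) :=
  {homo f : x y / set_val x <= set_val y >-> set_val x <= set_val y} /\
  continuous f /\
  exists g : Icc0 R l2 -> Icc0 R l1, [/\ continuous g, cancel f g & cancel g f].

Definition Gset (R : realType) (l1 l2 : R) :
  set {compact-open, Icc0 R l1 -> Icc0 R l2} := [set f | is_nd_homeo R l1 l2 f].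

Definition G (R : realType) (l1 l2 : R) : topologicalType := set_type (Gset R l1 l2).

Definition splits (R : realType) (L : R) : set (R * R) :=
  [set p | 0 < p.1 /\ 0 < p.2 /\ p.1 + p.2 = L].

Definition Gsum (R : realType) (L l1 l2 : R) : topologicalType :=
  {p : set_type (splits R L) & (G R (set_val p).1 l1 * G R (set_val p).2 l2)%type}.

From HB Require Import structures.
From mathcomp Require Import all_boot all_order all_algebra.
From mathcomp Require Import all_classical all_reals all_analysis.
Import Order.TTheory GRing.Theory Num.Theory.
Local Open Scope classical_set_scope.
Local Open Scope ring_scope.
From mathcomp Require Import ring lra.
Import numFieldNormedType.Exports.

(* A nondecreasing homeomorphism [0,a] -> [0,b] is handled through its extension
   [h : R -> R], equal to 0 on (-oo,0] and to b on [a,+oo), together with the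
   extension [k] of its inverse.  On extensions the tensor product is simply
   [x |-> h1 x + h2 (x - a1)], so monotonicity, continuity and invertibility are
   checked pointwise, and continuity in (phi1, phi2) follows from the joint
   continuity of evaluation on the compact interval [0,a].  A homeomorphism psi in
   G(L, l1+l2) decomposes in exactly one way: the split point must be psi^-1(l1),
   and truncating psi at level l1 gives the two factors.  The inverse is not
   continuous: tensoring linear homeomorphisms along the splits (c, L - c) gives a
   continuous path in G(L, l1+l2), which a continuous inverse would have to keep
   inside a single summand of the disjoint union, although c varies. *)

Set Implicit Arguments.
Unset Strict Implicit.
Unset Printing Implicit Defensive.

Section RealExtensions.
Variable R : realType.
Implicit Types (a b c x y : R) (h k : R -> R).

Definition clamp a x : R := Num.min (Num.max x 0) a.

Lemma clamp_itv a x : 0 <= a -> 0 <= clamp a x <= a.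
Proof.
by move=> ha; rewrite /clamp le_min ge_min le_max lexx orbT ha lexx orbT.
Qed.

Lemma clamp_id a x : 0 <= x <= a -> clamp a x = x.
Proof. by case/andP=> x0 xa; rewrite /clamp max_l // min_l. Qed.

Lemma clamp_le0 a x : 0 <= a -> x <= 0 -> clamp a x = 0.
Proof. by move=> ha hx; rewrite /clamp max_r // min_l. Qed.

Lemma clamp_ge a x : 0 <= a -> a <= x -> clamp a x = a.
Proof. by move=> ha hx; rewrite /clamp max_l ?min_r // (le_trans ha hx). Qed.

Lemma clamp_homo a : {homo clamp a : x y / x <= y}.
Proof. by move=> x y hxy; rewrite /clamp le_min2 // le_max2. Qed.

Lemma continuous_clamp a : continuous (clamp a).
Proof.
move=> x; apply: (@continuous_min R R (fun x => Num.max x 0) (fun _ => a)).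
  by apply: (@continuous_max R R id (fun _ => 0)); [exact: cvg_id|exact: cvg_cst].
exact: cvg_cst.
Qed.

Record ext_homeo a b h k : Prop := ExtHomeo {
  ext_cont : continuous h;
  ext_inv_cont : continuous k;
  ext_homo : {homo h : x y / x <= y};
  ext_inv_homo : {homo k : x y / x <= y};
  ext_le0 : forall x, x <= 0 -> h x = 0;
  ext_ge : forall x, a <= x -> h x = b;
  ext_inv_le0 : forall y, y <= 0 -> k y = 0;
  ext_inv_ge : forall y, b <= y -> k y = a;
  ext_K : forall x, 0 <= x <= a -> k (h x) = x;
  ext_invK : forall y, 0 <= y <= b -> h (k y) = y }.

Lemma ext_homeo_sym a b h k : ext_homeo a b h k -> ext_homeo b a k h.
Proof. by case=> *; split. Qed.

Lemma ext_homeo_itv a b h k : 0 <= a -> ext_homeo a b h k -> forall x, 0 <= h x <= b.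
Proof.
move=> ha [_ _ hh _ h0 hb _ _ _ _] x.
have h_0 := h0 0 (lexx 0); have h_a := hb a (lexx a).
have b0 : 0 <= b by rewrite -h_a -h_0 hh.
case: (lerP x 0) => hx; first by rewrite h0 // lexx.
case: (lerP a x) => hx'; first by rewrite hb // lexx b0.
by rewrite -h_0 -h_a !hh // ltW.
Qed.

Lemma ext_homeo_ge0 a b h k : 0 <= a -> ext_homeo a b h k -> 0 <= b.
Proof. by move=> ha H; have /andP[? ?] := ext_homeo_itv ha H 0; lra. Qed.

Lemma ext_homeo_clamp a b h k x : 0 <= a -> ext_homeo a b h k -> h (clamp a x) = h x.
Proof.
move=> ha [_ _ _ _ h0 hb _ _ _ _].
case: (lerP x 0) => hx; first by rewrite clamp_le0 // !h0.
case: (lerP a x) => hx'; first by rewrite clamp_ge // !hb.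
by rewrite clamp_id // (ltW hx) ltW.
Qed.

Lemma continuous_shift (T : topologicalType) (f : T -> R) c (t : T) :
  {for t, continuous f} -> {for t, continuous (fun s => f s + c)}.
Proof. by move=> cf; apply: (@continuousD _ _ _ f (fun _ => c) t cf); exact: cvg_cst. Qed.

Definition tensor_fun h1 h2 c x := h1 x + h2 (x - c).

Lemma tensor_funK a1 b1 a2 b2 h1 k1 h2 k2 : 0 <= a1 -> 0 <= a2 ->
  ext_homeo a1 b1 h1 k1 -> ext_homeo a2 b2 h2 k2 ->
  forall x, 0 <= x <= a1 + a2 -> tensor_fun k1 k2 b1 (tensor_fun h1 h2 a1 x) = x.
Proof.
move=> ha1 ha2 H1 H2 x /andP[x0 xa]; rewrite /tensor_fun.
case: (lerP x a1) => hx.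
  have /andP[_ ?] := ext_homeo_itv ha1 H1 x.
  rewrite [h2 _](ext_le0 H2) ?addr0; last lra.
  rewrite (ext_K H1) ?x0 ?hx // (ext_inv_le0 H2) ?addr0 //; lra.
have /andP[? ?] := ext_homeo_itv ha2 H2 (x - a1).
rewrite (ext_ge H1); last lra.
rewrite (ext_inv_ge H1); last lra.
rewrite [b1 + _]addrC addrK (ext_K H2); first by rewrite addrC subrK.
by apply/andP; split; lra.
Qed.

Lemma ext_homeo_tensor a1 b1 a2 b2 h1 k1 h2 k2 : 0 <= a1 -> 0 <= a2 ->
  ext_homeo a1 b1 h1 k1 -> ext_homeo a2 b2 h2 k2 ->
  ext_homeo (a1 + a2) (b1 + b2) (tensor_fun h1 h2 a1) (tensor_fun k1 k2 b1).
Proof.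
move=> ha1 ha2 H1 H2.
have hb1 := ext_homeo_ge0 ha1 H1; have hb2 := ext_homeo_ge0 ha2 H2.
split.
- move=> x; apply: continuousD; first exact: (ext_cont H1).
  by apply: continuous_comp; [exact/continuous_shift/cvg_id|exact: (ext_cont H2)].
- move=> x; apply: continuousD; first exact: (ext_inv_cont H1).
  by apply: continuous_comp; [exact/continuous_shift/cvg_id|exact: (ext_inv_cont H2)].
- move=> x y xy; apply: lerD; first exact: (ext_homo H1).
  by apply: (ext_homo H2); rewrite lerD2r.
- move=> x y xy; apply: lerD; first exact: (ext_inv_homo H1).
  by apply: (ext_inv_homo H2); rewrite lerD2r.
- by move=> x hx; rewrite /tensor_fun !(ext_le0 H1, ext_le0 H2) ?addr0 //; lra.
- by move=> x hx; rewrite /tensor_fun (ext_ge H1) ?(ext_ge H2) //; lra.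
- by move=> y hy; rewrite /tensor_fun !(ext_inv_le0 H1, ext_inv_le0 H2) ?addr0 //; lra.
- by move=> y hy; rewrite /tensor_fun (ext_inv_ge H1) ?(ext_inv_ge H2) //; lra.
- exact: (tensor_funK ha1 ha2 H1 H2).
- exact: (tensor_funK hb1 hb2 (ext_homeo_sym H1) (ext_homeo_sym H2)).
Qed.

Definition split_left h l x := Num.min (h x) l.
Definition split_left_inv k l y := k (Num.min y l).
Definition split_right h c l x := Num.max (h (x + c)) l - l.
Definition split_right_inv k c l y := k (Num.max y 0 + l) - c.

Lemma tensor_split h c l x : tensor_fun (split_left h l) (split_right h c l) c x = h x.
Proof.
by rewrite /tensor_fun /split_left /split_right subrK minElt maxElt; case: ltP => ?; lra.
Qed.

Section Split.
Variables (L B l : R) (h k : R -> R).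

Lemma split_point_hom : 0 < l -> l < B -> ext_homeo L B h k -> h (k l) = l.
Proof. by move=> l0 lB H; rewrite (ext_invK H) //; apply/andP; split; lra. Qed.

Lemma split_point_itv : 0 < l -> l < B -> ext_homeo L B h k -> 0 < k l < L.
Proof.
move=> l0 lB H; have hc := split_point_hom l0 lB H.
have /andP[c0 cL] := ext_homeo_itv (ltW (lt_trans l0 lB)) (ext_homeo_sym H) l.
rewrite !lt_def c0 cL !andbT; apply/andP; split; apply/eqP => e.
- by move: hc; rewrite e (ext_le0 H) //; lra.
- by move: hc; rewrite -e (ext_ge H) //; lra.
Qed.

Lemma ext_homeo_split_left : 0 < l -> l < B -> ext_homeo L B h k ->
  ext_homeo (k l) l (split_left h l) (split_left_inv k l).
Proof.
move=> l0 lB H; have hc := split_point_hom l0 lB H.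
have /andP[c0 cL] := split_point_itv l0 lB H.
case: H => hc' kc hm km h0 h1 k0 k1 kh hk.
rewrite /split_left /split_left_inv; split.
- move=> x; apply: (@continuous_min R R h (fun _ => l)); [exact: hc'|exact: cvg_cst].
- move=> x; apply: (@continuous_comp _ _ _ (fun y => Num.min y l) k); last exact: kc.
  apply: (@continuous_min R R id (fun _ => l)); [exact: cvg_id|exact: cvg_cst].
- by move=> x y hxy; rewrite le_min2 ?hm.
- by move=> x y hxy; rewrite km // le_min2.
- by move=> x hx; rewrite h0 // min_l // ltW.
- by move=> x hx; rewrite min_r // -hc hm.
- by move=> y hy; rewrite min_l ?k0 //; lra.
- by move=> y hy; rewrite min_r.
- move=> x /andP[x0 xc].
  have hl : h x <= l by rewrite -hc hm.
  rewrite !(min_l hl) kh //; apply/andP; split; lra.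
- by move=> y /andP[y0 yl]; rewrite (min_l yl) hk ?(min_l yl) // y0; lra.
Qed.

Lemma ext_homeo_split_right : 0 < l -> l < B -> ext_homeo L B h k ->
  ext_homeo (L - k l) (B - l) (split_right h (k l) l) (split_right_inv k (k l) l).
Proof.
move=> l0 lB H; have hc := split_point_hom l0 lB H.
have /andP[c0 cL] := split_point_itv l0 lB H.
set c := k l in hc c0 cL *.
case: H => hc' kc hm km h0 h1 k0 k1 kh hk.
rewrite /split_right /split_right_inv; split.
- move=> x; apply: (continuous_shift (f := fun x => Num.max (h (x + c)) l)).
  apply: (@continuous_max R R (fun x => h (x + c)) (fun _ => l)); last exact: cvg_cst.
  by apply: continuous_comp; [exact/continuous_shift/cvg_id|exact: hc'].
- move=> x; apply: (continuous_shift (f := fun y => k (Num.max y 0 + l))).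
  apply: continuous_comp; last exact: kc.
  apply: (continuous_shift (f := fun y => Num.max y 0)).
  by apply: (@continuous_max R R id (fun _ => 0)); [exact: cvg_id|exact: cvg_cst].
- by move=> x y hxy; rewrite lerD2r le_max2 ?hm ?lerD2r.
- by move=> x y hxy; rewrite lerD2r km // lerD2r le_max2.
- move=> x hx; rewrite max_r ?subrr // -hc hm //; lra.
- by move=> x hx; rewrite h1 ?max_l //; lra.
- by move=> y hy; rewrite max_r // add0r subrr.
- by move=> y hy; rewrite k1 ?max_l //; lra.
- move=> x /andP[x0 xc].
  have hl : l <= h (x + c) by rewrite -hc hm //; lra.
  rewrite max_l // max_l ?subr_ge0 // subrK kh ?addrK //; apply/andP; split; lra.
- move=> y /andP[y0 yl].
  have kc1 : c <= k (y + l) by rewrite km //; lra.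
  rewrite (max_l y0) subrK hk; last (apply/andP; split; lra).
  by rewrite max_l ?addrK //; lra.
Qed.

End Split.

Definition scale_fun a b x := clamp a x * (b / a).

Lemma continuous_scale_fun (T : topologicalType) (A X : T -> R) b (t : T) :
  {for t, continuous A} -> {for t, continuous X} -> A t != 0 ->
  {for t, continuous (fun w => scale_fun (A w) b (X w))}.
Proof.
move=> cA cX A0; rewrite /scale_fun /clamp.
apply: (@continuousM _ _ (fun w => Num.min (Num.max (X w) 0) (A w))).
  apply: (@continuous_min R T (fun w => Num.max (X w) 0) A t _ cA).
  exact: (@continuous_max R T X (fun _ => 0) t cX (cvg_cst _)).
apply: (@continuousM _ _ (fun _ => b) (fun w => (A w)^-1) t (cvg_cst _)).
exact: continuousV.
Qed.

Lemma scale_fun_homo a b : 0 < a -> 0 < b -> {homo scale_fun a b : x y / x <= y}.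
Proof. by move=> a0 b0 x y xy; rewrite ler_wpM2r ?clamp_homo // divr_ge0 // ltW. Qed.

Lemma scale_funK a b : 0 < a -> 0 < b -> forall x, 0 <= x <= a ->
  scale_fun b a (scale_fun a b x) = x.
Proof.
move=> a0 b0 x /andP[x0 xa]; rewrite /scale_fun (@clamp_id a x) ?x0 //.
rewrite clamp_id; first by field; rewrite !gt_eqF.
rewrite mulr_ge0 ?divr_ge0 //=; try exact: ltW.
by rewrite mulrA ler_pdivrMr // mulrC ler_pM2l.
Qed.

Lemma ext_homeo_scale a b : 0 < a -> 0 < b -> ext_homeo a b (scale_fun a b) (scale_fun b a).
Proof.
have cont a' b' : a' != 0 -> continuous (scale_fun a' b').
  move=> a0 x; apply: (continuous_scale_fun (A := fun=> a') (X := id)).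
  - exact: cvg_cst.
  - exact: cvg_id.
  - exact: a0.
move=> a0 b0; split.
- by apply: cont; rewrite gt_eqF.
- by apply: cont; rewrite gt_eqF.
- exact: scale_fun_homo.
- exact: scale_fun_homo.
- by move=> x hx; rewrite /scale_fun (clamp_le0 (ltW a0) hx) mul0r.
- by move=> x hx; rewrite /scale_fun (clamp_ge (ltW a0) hx); field; rewrite gt_eqF.
- by move=> y hy; rewrite /scale_fun (clamp_le0 (ltW b0) hy) mul0r.
- by move=> y hy; rewrite /scale_fun (clamp_ge (ltW b0) hy); field; rewrite gt_eqF.
- exact: scale_funK.
- exact: scale_funK.
Qed.

End RealExtensions.

Section Intervals.
Variable R : realType.
Implicit Types (a b x : R) (h k : R -> R).

Lemma in_Icc0 a x : (x \in [set` `[0, a]]) = (0 <= x <= a).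
Proof. by rewrite mem_setE in_itv. Qed.

Lemma Icc0_itv a (s : Icc0 R a) : 0 <= set_val s <= a.
Proof. by case: s => x hx; rewrite -in_Icc0. Qed.

Definition to_Icc0 a (ha : 0 <= a) x : Icc0 R a :=
  exist _ (clamp a x) (etrans (in_Icc0 a (clamp a x)) (clamp_itv x ha)).

Lemma val_to_Icc0 a (ha : 0 <= a) x : set_val (to_Icc0 ha x) = clamp a x.
Proof. by []. Qed.

Lemma val_to_Icc0_id a (ha : 0 <= a) x : 0 <= x <= a -> set_val (to_Icc0 ha x) = x.
Proof. exact: clamp_id. Qed.

Lemma to_Icc0_val a (ha : 0 <= a) (s : Icc0 R a) : to_Icc0 ha (set_val s) = s.
Proof. by apply: val_inj; rewrite /= clamp_id // Icc0_itv. Qed.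

Lemma to_Icc0_clamp a (ha : 0 <= a) x : to_Icc0 ha (clamp a x) = to_Icc0 ha x.
Proof. by apply: val_inj; rewrite /= clamp_id // clamp_itv. Qed.

Lemma continuous_set_val a : continuous (set_val : Icc0 R a -> R).
Proof. exact: initial_continuous. Qed.

Lemma continuous_to_Icc0 a (ha : 0 <= a) : continuous (to_Icc0 ha).
Proof. by apply: continuous_comp_initial; exact: continuous_clamp. Qed.

Definition extend a b (ha : 0 <= a) (f : Icc0 R a -> Icc0 R b) x : R :=
  set_val (f (to_Icc0 ha x)).

Definition restrict a b (hb : 0 <= b) h (s : Icc0 R a) : Icc0 R b :=
  to_Icc0 hb (h (set_val s)).
Arguments restrict a {b} hb h s.

Lemma extend_val a b (ha : 0 <= a) (f : Icc0 R a -> Icc0 R b) s :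
  extend ha f (set_val s) = set_val (f s).
Proof. by rewrite /extend to_Icc0_val. Qed.

Lemma continuous_restrict a b (hb : 0 <= b) h :
  continuous h -> continuous (restrict a hb h).
Proof.
move=> hc s; apply: continuous_comp; last exact: continuous_to_Icc0.
by apply: continuous_comp; [exact: continuous_set_val|exact: hc].
Qed.

Lemma continuous_extend a b (ha : 0 <= a) (f : Icc0 R a -> Icc0 R b) :
  continuous f -> continuous (extend ha f).
Proof.
move=> fc x; apply: continuous_comp; last exact: continuous_set_val.
by apply: continuous_comp; [exact: continuous_to_Icc0|exact: fc].
Qed.

Lemma extend_restrict a b (ha : 0 <= a) (hb : 0 <= b) h k :
  ext_homeo a b h k -> extend ha (restrict a hb h) =1 h.
Proof.
move=> H x; rewrite /extend /restrict !val_to_Icc0 (ext_homeo_clamp _ ha H).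
by rewrite clamp_id // (ext_homeo_itv ha H).
Qed.

Lemma restrict_extend a b (ha : 0 <= a) (hb : 0 <= b) (f : Icc0 R a -> Icc0 R b) :
  restrict a hb (extend ha f) = f.
Proof. by apply/funext => s; rewrite /restrict extend_val to_Icc0_val. Qed.

Lemma is_nd_homeo_restrict a b (ha : 0 <= a) (hb : 0 <= b) h k :
  ext_homeo a b h k -> is_nd_homeo R a b (restrict a hb h).
Proof.
move=> H; have r := ext_homeo_itv ha H; have r' := ext_homeo_itv hb (ext_homeo_sym H).
split; last split.
- by move=> s t hst; rewrite !val_to_Icc0 !clamp_id ?r // (ext_homo H).
- exact/continuous_restrict/(ext_cont H).
exists (restrict b ha k); split.
- exact/continuous_restrict/(ext_inv_cont H).
- move=> s; apply: val_inj; rewrite /= !val_to_Icc0.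
  by rewrite (clamp_id (r _)) (ext_K H) ?Icc0_itv // clamp_id ?Icc0_itv.
- move=> s; apply: val_inj; rewrite /= !val_to_Icc0.
  by rewrite (clamp_id (r' _)) (ext_invK H) ?Icc0_itv // clamp_id ?Icc0_itv.
Qed.

Lemma nd_homeo_inv_homo a b (f : Icc0 R a -> Icc0 R b) g :
  {homo f : x y / set_val x <= set_val y >-> set_val x <= set_val y} ->
  cancel f g -> cancel g f ->
  {homo g : x y / set_val x <= set_val y >-> set_val x <= set_val y}.
Proof.
move=> fm fg gf x y xy; case: leP => // gyx.
have := fm _ _ (ltW gyx); rewrite !gf => yx.
have exy : x = y by apply: val_inj; apply/eqP; rewrite eq_le xy.
by rewrite exy ltxx in gyx.
Qed.

Lemma extend_endpoints a b (ha : 0 <= a) (hb : 0 <= b) (f : Icc0 R a -> Icc0 R b) g :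
  {homo f : x y / set_val x <= set_val y >-> set_val x <= set_val y} ->
  cancel g f -> extend ha f 0 = 0 /\ extend ha f a = b.
Proof.
move=> fm gf; rewrite /extend.
have val0 c (hc : 0 <= c) : set_val (to_Icc0 hc 0) = 0 by rewrite val_to_Icc0 clamp_le0.
have valc c (hc : 0 <= c) : set_val (to_Icc0 hc c) = c by rewrite val_to_Icc0 clamp_id // hc lexx.
split; apply/eqP; rewrite eq_le.
- have /andP[-> _] := Icc0_itv (f (to_Icc0 ha 0)); rewrite andbT.
  rewrite -[X in _ <= X](val0 _ hb) -(gf (to_Icc0 hb 0)) fm // val0.
  by have /andP[] := Icc0_itv (g (to_Icc0 hb 0)).
- have /andP[_ ->] := Icc0_itv (f (to_Icc0 ha a)).
  rewrite -[X in X <= _](valc _ hb) -(gf (to_Icc0 hb b)) fm // valc.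
  by have /andP[] := Icc0_itv (g (to_Icc0 hb b)).
Qed.

Lemma ext_homeo_extend a b (ha : 0 <= a) (hb : 0 <= b) (f : Icc0 R a -> Icc0 R b) :
  is_nd_homeo R a b f -> exists k, ext_homeo a b (extend ha f) k.
Proof.
case=> fm [fc [g [gc fg gf]]]; exists (extend hb g).
have gm := nd_homeo_inv_homo fm fg gf.
have [f0 fa] := extend_endpoints ha hb fm gf.
have [g0 gb] := extend_endpoints hb ha gm fg.
split.
- exact: continuous_extend.
- exact: continuous_extend.
- by move=> x y xy; apply: fm; rewrite !val_to_Icc0 clamp_homo.
- by move=> x y xy; apply: gm; rewrite !val_to_Icc0 clamp_homo.
- by move=> x hx; rewrite /extend -to_Icc0_clamp clamp_le0 //; exact: f0.
- by move=> x ax; rewrite /extend -to_Icc0_clamp clamp_ge //; exact: fa.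
- by move=> y hy; rewrite /extend -to_Icc0_clamp clamp_le0 //; exact: g0.
- by move=> y hy; rewrite /extend -to_Icc0_clamp clamp_ge //; exact: gb.
- by move=> x x_itv; rewrite /extend to_Icc0_val fg val_to_Icc0 clamp_id.
- by move=> y y_itv; rewrite /extend to_Icc0_val gf val_to_Icc0 clamp_id.
Qed.

End Intervals.

Arguments restrict {R} a {b} hb h s.

Section Evaluation.
Variable R : realType.
Implicit Types (a b : R).

Lemma Icc0_compact a : 0 <= a -> compact [set: Icc0 R a].
Proof.
move=> ha; have -> : [set: Icc0 R a] = to_Icc0 ha @` `[0, a].
  apply/seteqP; split => // s _; exists (set_val s); last exact: to_Icc0_val.
  by rewrite /= in_itv /= Icc0_itv.
apply: continuous_compact; last exact: segment_compact.
by apply: continuous_subspaceT => x; exact: continuous_to_Icc0.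
Qed.

Lemma Icc0_locally_compact a : 0 <= a -> locally_compact [set: Icc0 R a].
Proof.
move=> ha x _; rewrite withinET; exists setT; first exact: filterT.
by split; [exact: Icc0_compact|exact: closedT].
Qed.

Lemma continuous_eval a b : 0 <= a ->
  continuous (fun z : G R a b * Icc0 R a => set_val z.1 z.2).
Proof.
move=> ha; have -> : (fun z : G R a b * Icc0 R a => set_val z.1 z.2) = uncurry set_val.
  by apply/funext => -[].
apply: continuous_uncurry_regular.
- exact: Icc0_locally_compact.
- exact: uniform_regular.
- exact: initial_continuous.
- by move=> u; have [_ []] := set_valP u.
Qed.

Lemma continuous_extend_joint (T : topologicalType) a b (ha : 0 <= a)
    (phi : T -> G R a b) (x : T -> R) (t : T) :
  {for t, continuous phi} -> {for t, continuous x} ->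
  {for t, continuous (fun w => extend ha (set_val (phi w)) (x w))}.
Proof.
move=> cphi cx.
apply: (continuous_comp (f := fun w => (phi w, to_Icc0 ha (x w)))
  (g := set_val \o fun z : G R a b * Icc0 R a => set_val z.1 z.2)).
  apply: (@cvg_pair _ _ _ _ (nbhs (phi t)) (nbhs (to_Icc0 ha (x t)))); first exact: cphi.
  by apply: continuous_comp; [exact: cx|exact: continuous_to_Icc0].
by apply: continuous_comp; [exact: continuous_eval|exact: continuous_set_val].
Qed.

End Evaluation.

Section Homeomorphisms.
Variable R : realType.
Implicit Types (a b : R).

Lemma continuous_G_restrict (T : topologicalType) a b (hb : 0 <= b) (F : T -> G R a b)
    (u : T -> R -> R) :
  (forall t, set_val (F t) = restrict a hb (u t)) ->
  continuous (fun z : T * Icc0 R a => u z.1 (set_val z.2)) -> continuous F.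
Proof.
move=> Fu cu; apply: continuous_comp_initial.
have -> : set_val \o F = curry (to_Icc0 hb \o fun z : T * Icc0 R a => u z.1 (set_val z.2)).
  by apply/funext => t; rewrite /= Fu.
apply: continuous_curry_fun => z.
by apply: continuous_comp; [exact: cu|exact: continuous_to_Icc0].
Qed.

Definition G_of_ext a b (ha : 0 <= a) (hb : 0 <= b) h k (H : ext_homeo a b h k) : G R a b :=
  exist _ (restrict a hb h) (mem_set (is_nd_homeo_restrict ha hb H)).

Lemma extend_G_of_ext a b (ha ha' : 0 <= a) (hb : 0 <= b) h k (H : ext_homeo a b h k) :
  extend ha' (set_val (G_of_ext ha hb H)) =1 h.
Proof. exact: extend_restrict H. Qed.

Lemma eq_G a b (phi chi : G R a b) :
  (forall s, set_val (set_val phi s) = set_val (set_val chi s)) -> phi = chi.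
Proof. by move=> e; apply/val_inj/funext => s; apply/val_inj/e. Qed.

Definition scale_homeo a b (ha : 0 < a) (hb : 0 < b) : G R a b :=
  G_of_ext (ltW ha) (ltW hb) (ext_homeo_scale ha hb).

Lemma ext_homeo_extend_G a b (ha : 0 <= a) (hb : 0 <= b) (phi : G R a b) :
  exists k, ext_homeo a b (extend ha (set_val phi)) k.
Proof. by apply: (ext_homeo_extend ha hb); exact: (set_valP phi). Qed.

End Homeomorphisms.

Section Splits.
Variables (R : realType) (L : R).
Implicit Types (p : set_type (splits R L)).

Lemma splits_fst_gt0 p : 0 < (set_val p).1.
Proof. by case: (set_valP p). Qed.

Lemma splits_snd_gt0 p : 0 < (set_val p).2.
Proof. by case: (set_valP p) => _ []. Qed.

Lemma splits_fst_ge0 p : 0 <= (set_val p).1.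
Proof. exact/ltW/splits_fst_gt0. Qed.

Lemma splits_snd_ge0 p : 0 <= (set_val p).2.
Proof. exact/ltW/splits_snd_gt0. Qed.

Lemma splits_sum p : (set_val p).1 + (set_val p).2 = L.
Proof. by case: (set_valP p) => _ []. Qed.

Lemma splits_eq p q : (set_val p).1 = (set_val q).1 -> p = q.
Proof.
move=> e; apply/val_inj/injective_projections => //.
by apply: (@addrI _ (set_val p).1); rewrite {2}e !splits_sum.
Qed.

End Splits.

Section TensorMap.
Variables (R : realType) (L l1 l2 : R).
Hypotheses (L_gt0 : 0 < L) (l1_gt0 : 0 < l1) (l2_gt0 : 0 < l2).

(* [lra] ignores section hypotheses, hence local copies such as [have L_pos := L_gt0]. *)

Local Notation Gpair p := (G R (set_val p).1 l1 * G R (set_val p).2 l2)%type.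

Let L_ge0 : 0 <= L := ltW L_gt0.
Let l12_ge0 : 0 <= l1 + l2 := addr_ge0 (ltW l1_gt0) (ltW l2_gt0).

Definition tensor_ext (p : set_type (splits R L)) (phi : Gpair p) : R -> R :=
  tensor_fun (extend (splits_fst_ge0 p) (set_val phi.1))
             (extend (splits_snd_ge0 p) (set_val phi.2)) (set_val p).1.

Lemma ext_homeo_tensor_ext (p : set_type (splits R L)) (phi : Gpair p) :
  exists k, ext_homeo L (l1 + l2) (@tensor_ext p phi) k.
Proof.
have [k1 H1] := ext_homeo_extend_G (splits_fst_ge0 p) (ltW l1_gt0) phi.1.
have [k2 H2] := ext_homeo_extend_G (splits_snd_ge0 p) (ltW l2_gt0) phi.2.
have := ext_homeo_tensor (splits_fst_ge0 p) (splits_snd_ge0 p) H1 H2.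
by rewrite splits_sum; exists (tensor_fun k1 k2 l1).
Qed.

Lemma tensor_ext_in_G (p : set_type (splits R L)) (phi : Gpair p) :
  restrict L l12_ge0 (@tensor_ext p phi) \in Gset R L (l1 + l2).
Proof.
have [k H] := ext_homeo_tensor_ext phi.
by apply: mem_set; exact: is_nd_homeo_restrict H.
Qed.

Definition tensor_homeo (p : set_type (splits R L)) (phi : Gpair p) : G R L (l1 + l2) :=
  exist _ (restrict L l12_ge0 (tensor_ext phi)) (tensor_ext_in_G phi).

Definition tensor_map (z : Gsum R L l1 l2) : G R L (l1 + l2) := tensor_homeo (projT2 z).

Lemma tensor_map_fst (p : set_type (splits R L)) (phi1 : G R (set_val p).1 l1)
    (phi2 : G R (set_val p).2 l2) (s : Icc0 R (set_val p).1) (t : Icc0 R L) :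
  set_val t = set_val s ->
  set_val (set_val (tensor_map (existT _ p (phi1, phi2))) t) = set_val (set_val phi1 s).
Proof.
have [k2 H2] := ext_homeo_extend_G (splits_snd_ge0 p) (ltW l2_gt0) phi2.
have /andP[s0 s1] := Icc0_itv s; have /andP[v0 v1] := Icc0_itv (set_val phi1 s).
have l2_pos := l2_gt0.
move=> ts; rewrite /= val_to_Icc0 /tensor_ext /tensor_fun ts extend_val /=.
by rewrite (ext_le0 H2) ?addr0 ?clamp_id //; [apply/andP; split|]; lra.
Qed.

Lemma tensor_map_snd (p : set_type (splits R L)) (phi1 : G R (set_val p).1 l1)
    (phi2 : G R (set_val p).2 l2) (s : Icc0 R (set_val p).2) (t : Icc0 R L) :
  set_val t = set_val s + (set_val p).1 ->
  set_val (set_val (tensor_map (existT _ p (phi1, phi2))) t) = set_val (set_val phi2 s) + l1.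
Proof.
have [k1 H1] := ext_homeo_extend_G (splits_fst_ge0 p) (ltW l1_gt0) phi1.
have /andP[s0 s1] := Icc0_itv s; have /andP[v0 v1] := Icc0_itv (set_val phi2 s).
have l1_pos := l1_gt0.
move=> ts; rewrite /= val_to_Icc0 /tensor_ext /tensor_fun ts addrK extend_val /=.
by rewrite (ext_ge H1) ?[l1 + _]addrC ?clamp_id //; [apply/andP; split|]; lra.
Qed.

Lemma continuous_tensor_homeo (p : set_type (splits R L)) : continuous (@tensor_homeo p).
Proof.
apply: (continuous_G_restrict (u := @tensor_ext p)) => // z.
have c11 : {for z, continuous (fun z : _ * Icc0 R L => z.1.1)}.
  by apply: continuous_comp; exact: cvg_fst.
have c12 : {for z, continuous (fun z : _ * Icc0 R L => z.1.2)}.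
  by apply: continuous_comp; [exact: cvg_fst|exact: cvg_snd].
have c2 : {for z, continuous (fun z : _ * Icc0 R L => set_val z.2)}.
  by apply: continuous_comp; [exact: cvg_snd|exact: continuous_set_val].
rewrite /tensor_ext /tensor_fun.
apply: (@continuousD _ _ _ (fun z : Gpair p * Icc0 R L =>
  extend (splits_fst_ge0 p) (set_val z.1.1) (set_val z.2))).
all: apply: continuous_extend_joint => //.
exact: continuous_shift.
Qed.

Lemma continuous_tensor_map : continuous tensor_map.
Proof. by apply: sigT_continuous => p; exact: continuous_tensor_homeo. Qed.

Lemma tensor_map_surj (psi : G R L (l1 + l2)) : exists z, tensor_map z = psi.
Proof.
have l1B : l1 < l1 + l2 by rewrite ltrDl.
have [k H] := ext_homeo_extend_G L_ge0 l12_ge0 psi.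
set h := extend L_ge0 (set_val psi) in H.
have /andP[c0 cL] := split_point_itv l1_gt0 l1B H.
have H1 := ext_homeo_split_left l1_gt0 l1B H.
have := ext_homeo_split_right l1_gt0 l1B H; rewrite addrAC subrr add0r => H2.
have p_in : (k l1, L - k l1) \in splits R L.
  by apply: mem_set; split => //=; rewrite ?subr_gt0 // addrC subrK.
pose p : set_type (splits R L) := exist _ (k l1, L - k l1) p_in.
exists (existT _ p (G_of_ext (ltW c0) (ltW l1_gt0) H1,
                    G_of_ext (splits_snd_ge0 p) (ltW l2_gt0) H2)).
apply: val_inj; rewrite /= -[RHS](restrict_extend L_ge0); congr restrict.
apply/funext => x; rewrite /tensor_ext /tensor_fun !extend_G_of_ext.
exact: tensor_split.
Qed.

Lemma tensor_map_split_point (p : set_type (splits R L)) (phi1 : G R (set_val p).1 l1)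
    (phi2 : G R (set_val p).2 l2) :
  set_val (set_val (tensor_map (existT _ p (phi1, phi2))) (to_Icc0 L_ge0 (set_val p).1)) = l1.
Proof.
have [k1 H1] := ext_homeo_extend_G (splits_fst_ge0 p) (ltW l1_gt0) phi1.
have p1 := splits_fst_gt0 p; have p2 := splits_snd_gt0 p; have ps := splits_sum p.
rewrite (tensor_map_fst phi1 phi2 (s := to_Icc0 (splits_fst_ge0 p) (set_val p).1)).
  exact: (ext_ge H1 (lexx _)).
by rewrite !val_to_Icc0_id //; apply/andP; split; lra.
Qed.

Lemma tensor_map_inj : injective tensor_map.
Proof.
move=> [p [phi1 phi2]] [q [chi1 chi2]] e.
have [_ [_ [g [_ psiK _]]]] := set_valP (tensor_map (existT _ q (chi1, chi2))).
have pq : p = q.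
  apply: splits_eq.
  have := etrans (tensor_map_split_point phi1 phi2) (esym (tensor_map_split_point chi1 chi2)).
  rewrite e => /val_inj/(can_inj psiK)/(congr1 set_val).
  have p1 := splits_fst_gt0 p; have p2 := splits_snd_gt0 p; have ps := splits_sum p.
  have q1 := splits_fst_gt0 q; have q2 := splits_snd_gt0 q; have qs := splits_sum q.
  by rewrite !val_to_Icc0_id //; apply/andP; split; lra.
subst q; have p1 := splits_fst_gt0 p; have p2 := splits_snd_gt0 p; have ps := splits_sum p.
suff [-> ->] : phi1 = chi1 /\ phi2 = chi2 by [].
split; apply: eq_G => s; have /andP[s0 s1] := Icc0_itv s.
- have t_val : set_val (to_Icc0 L_ge0 (set_val s)) = set_val s.
    by rewrite val_to_Icc0_id //; apply/andP; split; lra.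
  by rewrite -(tensor_map_fst phi1 phi2 t_val) e (tensor_map_fst chi1 chi2 t_val).
- have t_val : set_val (to_Icc0 L_ge0 (set_val s + (set_val p).1)) = set_val s + (set_val p).1.
    by rewrite val_to_Icc0_id //; apply/andP; split; lra.
  apply: (@addIr _ l1).
  by rewrite -(tensor_map_snd phi1 phi2 t_val) e (tensor_map_snd chi1 chi2 t_val).
Qed.

Lemma tensor_map_bij : bijective tensor_map.
Proof.
rewrite -setTT_bijective; split => //.
- by move=> z w _ _; exact: tensor_map_inj.
- by move=> psi _; have [z <-] := tensor_map_surj psi; exists z.
Qed.

(* Clamped into [L/4, 3L/4], so that every parameter c : R gives a split. *)
Definition mid_point c := clamp (L / 2) (c - L / 4) + L / 4.

Lemma mid_point_itv c : L / 4 <= mid_point c <= 3 * L / 4.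
Proof.
have L_pos := L_gt0; have L2_ge0 : 0 <= L / 2 by lra.
have /andP[m0 m1] := clamp_itv (c - L / 4) L2_ge0.
by rewrite /mid_point; apply/andP; split; lra.
Qed.

Lemma mid_point_id c : L / 4 <= c <= 3 * L / 4 -> mid_point c = c.
Proof.
have L_pos := L_gt0; case/andP => c0 c1.
by rewrite /mid_point clamp_id ?subrK //; apply/andP; split; lra.
Qed.

Lemma continuous_mid_point : continuous mid_point.
Proof.
move=> c; apply: (continuous_shift (f := fun c => clamp (L / 2) (c - L / 4))).
by apply: continuous_comp; [exact/continuous_shift/cvg_id|exact: continuous_clamp].
Qed.

Lemma mid_point_in_splits c : (mid_point c, L - mid_point c) \in splits R L.
Proof.
have L_pos := L_gt0; have /andP[m0 m1] := mid_point_itv c.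
by apply: mem_set; split => /=; [|split]; lra.
Qed.

Definition mid_split c : set_type (splits R L) :=
  exist _ (mid_point c, L - mid_point c) (mid_point_in_splits c).

Definition scale_path c : G R L (l1 + l2) :=
  tensor_map (existT _ (mid_split c) (scale_homeo (splits_fst_gt0 (mid_split c)) l1_gt0,
                                      scale_homeo (splits_snd_gt0 (mid_split c)) l2_gt0)).

Lemma continuous_scale_path : continuous scale_path.
Proof.
pose u c x := scale_fun (mid_point c) l1 x + scale_fun (L - mid_point c) l2 (x - mid_point c).
apply: (continuous_G_restrict (hb := l12_ge0) (u := u)).
  move=> c; congr restrict; apply/funext => x.
  by rewrite /tensor_ext /tensor_fun /scale_homeo /= !extend_G_of_ext.
move=> z; have /andP[m0 m1] := mid_point_itv z.1; have L_pos := L_gt0.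
have cm : {for z, continuous (fun z : R * Icc0 R L => mid_point z.1)}.
  by apply: continuous_comp; [exact: cvg_fst|exact: continuous_mid_point].
have cs : {for z, continuous (fun z : R * Icc0 R L => set_val z.2)}.
  by apply: continuous_comp; [exact: cvg_snd|exact: continuous_set_val].
rewrite /u; apply: (@continuousD _ _ _ (fun z : R * Icc0 R L =>
  scale_fun (mid_point z.1) l1 (set_val z.2))); apply: continuous_scale_fun => //.
- by rewrite gt_eqF //; lra.
- by apply: continuousB => //; exact: cvg_cst.
- exact: continuousB.
- by rewrite gt_eqF // subr_gt0; lra.
Qed.

Lemma tensor_map_not_homeo :
  ~ exists H : G R L (l1 + l2) -> Gsum R L l1 l2,
      [/\ continuous H, cancel tensor_map H & cancel H tensor_map].
Proof.
case=> H [Hc FH HF]; have L_pos := L_gt0.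
pose p0 := mid_split (L / 2).
pose S : set (Gsum R L l1 l2) := existT _ p0 @` setT.
have S_open : open S by apply: existT_open_map; exact: openT.
have : \forall c \near L / 2, S (H (scale_path c)).
  have := continuous_comp (fun P => @continuous_scale_path (L / 2) P)
                          (fun P => @Hc (scale_path (L / 2)) P).
  apply; apply: open_nbhs_nbhs; split => //.
  by rewrite /scale_path /= FH; eexists.
move=> /nbhs_ballP[e /= e_gt0 He].
pose d := Num.min (e / 2) (L / 8).
have d_gt0 : 0 < d by rewrite lt_min !divr_gt0.
have [de dL] : d <= e / 2 /\ d <= L / 8 by split; rewrite ge_min lexx ?orbT.
have : ball (L / 2) e (L / 2 + d).
  by rewrite -ball_normE /ball_ /= opprD addrA subrr add0r normrN ger0_norm; lra.
move=> /He[y _ /(congr1 (fun z => (set_val (projT1 z)).1))].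
rewrite /scale_path FH /= !mid_point_id; try (apply/andP; split); lra.
Qed.

End TensorMap.

Theorem proposition4p6 (R : realType) (L l1 l2 : R) :
  0 < L -> 0 < l1 -> 0 < l2 ->
  exists F : Gsum R L l1 l2 -> G R L (l1 + l2),
    [/\ (* F is induced by (phi1, phi2) |-> phi1 (x) phi2 *)
        (forall (p : set_type (splits R L)) (phi1 : G R (set_val p).1 l1)
                (phi2 : G R (set_val p).2 l2),
           (forall (s : Icc0 R (set_val p).1) (t : Icc0 R L),
              set_val t = set_val s ->
              set_val (set_val (F (existT _ p (phi1, phi2))) t)
              = set_val (set_val phi1 s)) /\
           (forall (s : Icc0 R (set_val p).2) (t : Icc0 R L),
              set_val t = set_val s + (set_val p).1 ->
              set_val (set_val (F (existT _ p (phi1, phi2))) t)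
              = set_val (set_val phi2 s) + l1)),
        continuous F,
        bijective F &
        ~ (exists H : G R L (l1 + l2) -> Gsum R L l1 l2,
              [/\ continuous H, cancel F H & cancel H F])].
Proof.
move=> L_gt0 l1_gt0 l2_gt0; exists (tensor_map L_gt0 l1_gt0 l2_gt0); split.
- by move=> p phi1 phi2; split=> s t; [exact: tensor_map_fst|exact: tensor_map_snd].
- exact: continuous_tensor_map.
- exact: tensor_map_bij.
- exact: tensor_map_not_homeo.
Qed.
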